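(* Let $A$ be the $8\times 8$ adjacency matrix of Ashley's graph, the directed graph on vertices $v_1,\dots,v_8$ with exactly the following 16 edges: $v_1\to v_1$, $v_1\to v_3$, $v_2\to v_2$, $v_2\to v_1$, $v_3\to v_5$, $v_3\to v_6$, $v_4\to v_2$, $v_4\to v_8$, $v_5\to v_7$, $v_5\to v_4$, $v_6\to v_4$, $v_6\to v_5$, $v_7\to v_8$, $v_7\to v_3$, $v_8\to v_6$, $v_8\to v_7$. Then $A$ is unitally shift equivalent to the $1\times1$ matrix $(2)$.
   Context: Two square $\mathbb{N}$-matrices $A,B$ are shift equivalent if there are an integer $\ell\ge1$ and rectangular $\mathbb{N}$-matrices $R,S$ with $A^\ell=RS$, $B^\ell=SR$, $AR=RB$, $BS=SA$. Such a shift equivalence $(R,S)$ is unital if there are $m,k\in\mathbb{N}$ with $(B^t)^mR^t\underline{1}=(B^t)^{m+k}\underline{1}$, where $\underline1$ is the all-ones column vector. $A$ and $B$ are unitally shift equivalent if a unital shift equivalence from $A$ to $B$ exists. *)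

From mathcomp Require Import all_boot all_order all_algebra.
Set Implicit Arguments. Unset Strict Implicit. Unset Printing Implicit Defensive.
Import GRing.Theory.
Local Open Scope ring_scope.

Definition ones (m : nat) : 'cV[nat]_m := const_mx 1%N.

Definition shift_equiv_by (m n : nat) (A : 'M[nat]_m) (B : 'M[nat]_n)
  (l : nat) (R : 'M[nat]_(m, n)) (S : 'M[nat]_(n, m)) : Prop :=
  [/\ (1 <= l)%N, A ^+ l = R *m S, B ^+ l = S *m R,
      A *m R = R *m B & B *m S = S *m A].

Definition unital_se (m n : nat) (B : 'M[nat]_n) (R : 'M[nat]_(m, n)) : Prop :=
  exists p k : nat, (B^T) ^+ p *m R^T *m ones m = (B^T) ^+ (p + k) *m ones n.

Definition unitally_shift_equivalent (m n : nat) (A : 'M[nat]_m) (B : 'M[nat]_n)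
  : Prop :=
  exists (l : nat) (R : 'M[nat]_(m, n)) (S : 'M[nat]_(n, m)),
    shift_equiv_by A B l R S /\ unital_se B R.

(* Ashley's graph, vertices v_1..v_8 encoded as indices 0..7 *)
Definition ashley_edge (i j : nat) : bool :=
  match i, j with
  | 0, 0 | 0, 2 | 1, 1 | 1, 0 | 2, 4 | 2, 5 | 3, 1 | 3, 7
  | 4, 6 | 4, 3 | 5, 3 | 5, 4 | 6, 7 | 6, 2 | 7, 5 | 7, 6 => true
  | _, _ => false
  end%N.

Definition ashley : 'M[nat]_8 := \matrix_(i < 8, j < 8) (ashley_edge i j : nat).

Definition two11 : 'M[nat]_1 := const_mx 2%N.

From mathcomp Require Import all_boot all_order all_algebra.
Set Implicit Arguments.
Unset Strict Implicit.
Unset Printing Implicit Defensive.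
Import GRing.Theory.
Local Open Scope ring_scope.

(* Every vertex of Ashley's graph has in- and out-degree 2, and A^6 = 8 J
   where J is the all-ones matrix.  For an N-matrix A of size n = d^k with
   all row and column sums equal to d and A^l = c J, the column of ones
   R and the constant row S = (c ... c) form a shift equivalence of lag l
   from A to (d): RS = cJ = A^l, SR = cn = d^l, AR = dR = R(d) and
   (d)S = dS = SA; it is unital because R^T 1 = n = d^k. *)

Lemma mul_const_mx m n p (a b : nat) :
  (const_mx a : 'M[nat]_(m, n)) *m (const_mx b : 'M_(n, p)) = const_mx (a * b * n)%N.
Proof.
apply/matrixP => i j; rewrite !mxE.
under eq_bigr do rewrite !mxE.
by rewrite sumr_const card_ord -(mulr_natr (a * b : nat)) natn.
Qed.

Lemma expr_const_mx1 (a l : nat) : (const_mx a : 'M[nat]_1) ^+ l = const_mx (a ^ l)%N.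
Proof.
elim: l => [|l IHl].
  by apply/matrixP => i j; rewrite !ord1 !mxE.
by rewrite exprS -mulmxE IHl mul_const_mx muln1 expnS.
Qed.

Section RegularMatrix.
Variables (n d : nat) (A : 'M[nat]_n).
Hypothesis rowsumA : forall i, \sum_j A i j = d.
Hypothesis colsumA : forall j, \sum_i A i j = d.

Lemma mulmx_const_rowsum p a : A *m (const_mx a : 'M_(n, p)) = const_mx (d * a)%N.
Proof.
apply/matrixP => i j; rewrite !mxE -(rowsumA i) big_distrl /=.
by apply: eq_bigr => k _; rewrite mxE.
Qed.

Lemma mul_const_colsum_mx p a : (const_mx a : 'M_(p, n)) *m A = const_mx (a * d)%N.
Proof.
apply/matrixP => i j; rewrite !mxE -(colsumA j) big_distrr /=.
by apply: eq_bigr => k _; rewrite mxE.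
Qed.

Lemma exprX_mulmx_const p l a :
  A ^+ l *m (const_mx a : 'M_(n, p)) = const_mx (d ^ l * a)%N.
Proof.
elim: l a => [|l IHl] a; first by rewrite expr0 mul1mx mul1n.
by rewrite exprSr -mulmxE -mulmxA mulmx_const_rowsum IHl expnSr mulnA.
Qed.

End RegularMatrix.

Section RegularShiftEquivalence.
Variables (n d l k c : nat) (A : 'M[nat]_n).
Hypotheses (n_gt0 : (0 < n)%N) (l_gt0 : (0 < l)%N).
Hypothesis rowsumA : forall i, \sum_j A i j = d.
Hypothesis colsumA : forall j, \sum_i A i j = d.
Hypothesis expA : A ^+ l = const_mx c.
Hypothesis dim_expd : n = (d ^ k)%N.

Lemma const_dim_expd : (c * n)%N = (d ^ l)%N.
Proof.
have := exprX_mulmx_const rowsumA 1 l 1.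
rewrite expA mul_const_mx => /matrixP/(_ (Ordinal n_gt0) 0).
by rewrite !mxE !muln1.
Qed.

Theorem regular_unitally_shift_equivalent :
  unitally_shift_equivalent A (const_mx d : 'M_1).
Proof.
exists l, (ones n), (const_mx c); split; first split.
- exact: l_gt0.
- by rewrite expA mul_const_mx mul1n muln1.
- by rewrite expr_const_mx1 mul_const_mx muln1 const_dim_expd.
- by rewrite (mulmx_const_rowsum rowsumA) mul_const_mx mul1n muln1.
- by rewrite (mul_const_colsum_mx colsumA) mul_const_mx muln1 mulnC.
exists 0%N, k; rewrite !trmx_const expr0 mul1mx expr_const_mx1 !mul_const_mx.
by rewrite !muln1 mul1n dim_expd.
Qed.

End RegularShiftEquivalence.

(* Square matrices given by their entry functions on nat, so that matrix
   identities reduce to boolean checks decided by [vm_compute]. *)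
Section FunMatrix.
Variable n : nat.

Definition fun_mx (f : nat -> nat -> nat) : 'M[nat]_n := \matrix_(i, j) f i j.

Definition fun_mul (f g : nat -> nat -> nat) (i j : nat) : nat :=
  sumn [seq f i k * g k j | k <- iota 0 n]%N.

Definition fun_eqb (f g : nat -> nat -> nat) : bool :=
  all (fun i => all (fun j => f i j == g i j) (iota 0 n)) (iota 0 n).

Definition fun_rowsumb (f : nat -> nat -> nat) (d : nat) : bool :=
  all (fun i => sumn [seq f i j | j <- iota 0 n] == d) (iota 0 n).

Definition fun_colsumb (f : nat -> nat -> nat) (d : nat) : bool :=
  all (fun j => sumn [seq f i j | i <- iota 0 n] == d) (iota 0 n).

Lemma sum_ord_sumn (F : nat -> nat) : \sum_(i < n) F i = sumn [seq F i | i <- iota 0 n].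
Proof. by rewrite -(big_mkord xpredT F) sumnE big_map /index_iota subn0. Qed.

Lemma fun_mxM f g : fun_mx f *m fun_mx g = fun_mx (fun_mul f g).
Proof.
apply/matrixP => i j; rewrite !mxE.
by under eq_bigr do rewrite !mxE; rewrite (sum_ord_sumn (fun k => f i k * g k j)%N).
Qed.

Lemma fun_mxX f l : fun_mx f ^+ l.+1 = fun_mx (iter l (fun_mul f) f).
Proof.
elim: l => [|l IHl]; first by rewrite expr1.
by rewrite exprS IHl -mulmxE fun_mxM.
Qed.

Lemma fun_mx_eq f g : fun_eqb f g -> fun_mx f = fun_mx g.
Proof.
move=> /allP eq_fg; apply/matrixP => i j; rewrite !mxE; apply/eqP.
by move: (eq_fg i); rewrite mem_iota ltn_ord => /(_ isT)/allP->; rewrite // mem_iota ltn_ord.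
Qed.

Lemma fun_mx_rowsum f d : fun_rowsumb f d -> forall i, \sum_j fun_mx f i j = d.
Proof.
move=> /allP rowsum_f i; under eq_bigr do rewrite mxE.
by rewrite (sum_ord_sumn (f i)); apply/eqP/rowsum_f; rewrite mem_iota ltn_ord.
Qed.

Lemma fun_mx_colsum f d : fun_colsumb f d -> forall j, \sum_i fun_mx f i j = d.
Proof.
move=> /allP colsum_f j; under eq_bigr do rewrite mxE.
by rewrite (sum_ord_sumn (f^~ j)); apply/eqP/colsum_f; rewrite mem_iota ltn_ord.
Qed.

End FunMatrix.

Definition ashley_fun (i j : nat) : nat := ashley_edge i j.

Lemma ashley_fun_mx : ashley = fun_mx 8 ashley_fun.
Proof. by []. Qed.

Lemma ashley_expr6 : ashley ^+ 6 = const_mx 8%N.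
Proof.
rewrite ashley_fun_mx fun_mxX.
have -> : const_mx 8%N = fun_mx 8 (fun _ _ => 8%N) by apply/matrixP => i j; rewrite !mxE.
by apply: fun_mx_eq; vm_compute.
Qed.

Theorem mainTheorem11 : unitally_shift_equivalent ashley two11.
Proof.
apply: (regular_unitally_shift_equivalent (l := 6) (k := 3)) => //.
- by rewrite ashley_fun_mx; apply: fun_mx_rowsum; vm_compute.
- by rewrite ashley_fun_mx; apply: fun_mx_colsum; vm_compute.
- exact: ashley_expr6.
Qed.
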